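(* Let $W$ be a neat, upward-restricted layered wheel. Then the class of finite induced subgraphs of $W$ has bounded twin-width.
   Context: A layered wheel is a countably infinite graph $W$ on the same vertex set as a countably infinite, locally finite rooted tree $T$ embedded in the plane, such that: (1) for every natural number $n$, the set $L_n$ of nodes at distance $n$ from the root induces in $W$ a finite path visiting $L_n$ in the left-to-right order of the embedding; edges inside layers are layer edges, forming $E_L$; (2) every edge not in $E_L$ joins two nodes in ancestor–descendant relation in $T$; (3) there is a finite bound on the length of paths in $T$ consisting only of degree-$2$ nodes of $T$. A node is its own ancestor and descendant. $W$ is neat if $T$ has no leaf; $W$ is upward-restricted if there is an integer $t$ such that for every node $v$ there is a set $X_v$ of at most $t$ ancestors of $v$ such that in $W-E_L$ every edge with exactly one endpoint among the descendants of $v$ has its other endpoint in $X_v$. Twin-width: a partition sequence of an $n$-vertex graph $G$ is a sequence $\mathcal P_n,\dots,\mathcal P_1$ of partitions of $V(G)$ where $\mathcal P_n$ is the partition into singletons and each $\mathcal P_i$ ($i<n$) is obtained from $\mathcal P_{i+1}$ by merging two parts. For a partition $\mathcal P$, the red graph $\mathcal R(\mathcal P)$ has vertex set $\mathcal P$ and an edge between distinct parts $P,P'$ whenever there are $u,v\in P$ and $u',v'\in P'$ (possibly $u=v$ or $u'=v'$) with $uu'\in E(G)$ and $vv'\notin E(G)$. The twin-width of $G$ is the least $d$ such that $G$ has a partition sequence all of whose red graphs have maximum degree at most $d$. *)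

From mathcomp Require Import all_boot.
Set Implicit Arguments. Unset Strict Implicit. Unset Printing Implicit Defensive.

(* Countably infinite, locally finite rooted trees embedded in the plane.    *)
(* A node is a pair (n, i): the i-th node (from the left, 0-based) of layer  *)
(* L_n (nodes at distance n from the root).  Layer n has [lsize n] nodes;    *)
(* [par n i] is the position in layer n of the parent of node (n.+1, i).     *)
(* The plane embedding is encoded by the left-to-right order of the layers,  *)
(* which must be compatible with the parent map (parents are monotone).      *)
Record ptree := PTree {
  lsize : nat -> nat;
  par : nat -> nat -> nat;
  lsize_root : lsize 0 = 1;
  lsize_pos : forall n, 0 < lsize n;           (* the tree is infinite *)
  par_lt : forall n i, i < lsize n.+1 -> par n i < lsize n;
  par_mono : forall n i j, i <= j -> j < lsize n.+1 -> par n i <= par n j }.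

Definition Node := (nat * nat)%type.

Definition valid (T : ptree) (v : Node) : bool := v.2 < lsize T v.1.

Fixpoint anc_pos (T : ptree) (n i k : nat) : nat :=
  match k with
  | 0 => i
  | k'.+1 => anc_pos T n.-1 (par T n.-1 i) k'
  end.

(* [is_anc T u v] : u is an ancestor of v (a node is its own ancestor) *)
Definition is_anc (T : ptree) (u v : Node) : bool :=
  (u.1 <= v.1) && (anc_pos T v.1 v.2 (v.1 - u.1) == u.2).

Definition tadj (T : ptree) (u v : Node) : bool :=
  ((v.1 == u.1.+1) && (par T u.1 v.2 == u.2)) ||
  ((u.1 == v.1.+1) && (par T v.1 u.2 == v.2)).

Definition nchildren (T : ptree) (v : Node) : nat :=
  count (fun j => par T v.1 j == v.2) (iota 0 (lsize T v.1.+1)).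

Definition tdeg (T : ptree) (v : Node) : nat := nchildren T v + (0 < v.1).

Record layered_wheel (T : ptree) (adj : rel Node) : Prop := {
  lw_support : forall u v, adj u v -> valid T u && valid T v;
  lw_sym : forall u v, adj u v = adj v u;
  lw_irr : forall v, ~~ adj v v;
  lw_layer : forall n i j, i < lsize T n -> j < lsize T n ->
      adj (n, i) (n, j) = (i.+1 == j) || (j.+1 == i);
  lw_anc : forall u v, adj u v -> u.1 != v.1 -> is_anc T u v || is_anc T v u;
  lw_deg2 : exists K, forall (x : Node) (s : seq Node),
      all (valid T) (x :: s) -> uniq (x :: s) -> path (tadj T) x s ->
      all (fun v => tdeg T v == 2) (x :: s) -> size s <= K }.

Definition neat (T : ptree) : Prop := forall v, valid T v -> 0 < nchildren T v.

(* upward-restricted; edges of W - E_L are the edges between distinct layers *)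
Definition upward_restricted (T : ptree) (adj : rel Node) : Prop :=
  exists t : nat, forall v, valid T v ->
    exists X : seq Node,
      [/\ size X <= t,
          all (fun x => valid T x && is_anc T x v) X &
          forall x y, adj x y -> x.1 != y.1 ->
            is_anc T v x -> ~~ is_anc T v y -> y \in X].

Definition merge_step (V : finType) (P Q : {set {set V}}) : Prop :=
  exists A B, [/\ A \in P, B \in P, A != B & Q = (A :|: B) |: (P :\ A :\ B)].

Definition red_edge (V : finType) (e : rel V) (A B : {set V}) : bool :=
  [exists u in A, exists v in A, exists u' in B, exists v' in B,
     e u u' && ~~ e v v'].

Definition red_maxdeg_le (V : finType) (e : rel V) (P : {set {set V}}) (d : nat)
  : Prop :=
  forall A, A \in P -> #|[set B in P | (B != A) && red_edge e A B]| <= d.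

(* the graph has a partition sequence P_n, ..., P_1 (listed in this order)
   all of whose red graphs have maximum degree at most d, i.e. tww <= d *)
Definition tww_le (V : finType) (e : rel V) (d : nat) : Prop :=
  exists ps : seq {set {set V}},
    [/\ size ps = #|V|,
        0 < size ps -> nth set0 ps 0 = [set [set x] | x : V],
        forall i, i.+1 < size ps -> merge_step (nth set0 ps i) (nth set0 ps i.+1) &
        forall i, i < size ps -> red_maxdeg_le e (nth set0 ps i) d].

Definition induced (adj : rel Node) (S : seq Node) : rel (seq_sub S) :=
  fun x y => adj (ssval x) (ssval y).
Arguments induced adj S : clear implicits.

From mathcomp Require Import all_boot zify.
From Stdlib Require Import IndefiniteDescription.
Set Implicit Arguments. Unset Strict Implicit. Unset Printing Implicit Defensive.

(* Contract a finite induced subgraph W[S] bottom-up, one layer at a time.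
   At every stage each part consists of nodes in the subtree of one "owner"
   node v of the current layer (or of the layer above), with the same
   adjacency profile towards the at most t guard nodes X v above v given by
   upward restriction.  Nodes with the same profile then have the same
   neighbours above v, so a red edge can only join parts whose owners are
   equal, neighbours in a layer, or in parent position; as consecutive nodes
   of a neat tree have equal or consecutive parents, red degrees are bounded
   by 5 (1 + 2^t + 2^(t+1)).  Sweeping a layer from left to right, merging
   a subtree into its parent changes the parts of at most two owners, and any
   refinement changing few parts of a partition with small red degree can be
   resolved by pairwise merges without increasing red degrees much. *)

Lemma downward_ind (P : nat -> Prop) n :
  P n -> (forall k, k < n -> P k.+1 -> P k) -> forall k, k <= n -> P k.
Proof.
move=> Pn step k; move Ed: (n - k) => d; elim: d k Ed => [|d IH] k Ed kn.
  by have -> : k = n by lia.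
by apply: step; [lia | apply: IH; lia].
Qed.

Section PartitionSequences.
Variables (V : finType) (e : rel V).
Implicit Types (P Q R : {set {set V}}) (A B : {set V}).

Definition refines P Q := forall A, A \in P -> exists2 B, B \in Q & A \subset B.

Definition merge_parts P A1 A2 := (A1 :|: A2) |: (P :\ A1 :\ A2).

Definition tww_from P d := exists ps : seq {set {set V}},
  [/\ size ps = #|P|, 0 < size ps -> nth set0 ps 0 = P,
      forall i, i.+1 < size ps -> merge_step (nth set0 ps i) (nth set0 ps i.+1) &
      forall i, i < size ps -> red_maxdeg_le e (nth set0 ps i) d].

Lemma red_edgeS A A' B B' :
  A \subset A' -> B \subset B' -> red_edge e A B -> red_edge e A' B'.
Proof.
move=> /subsetP sA /subsetP sB.
move=> /exists_inP[u /sA uA /exists_inP[v /sA vA /exists_inP[u' /sB u'B]]].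
move=> /exists_inP[v' /sB v'B uv].
apply/exists_inP; exists u => //; apply/exists_inP; exists v => //.
by apply/exists_inP; exists u' => //; apply/exists_inP; exists v'.
Qed.

Section OnePartition.
Variable Q : {set {set V}}.
Hypothesis partQ : partition Q [set: V].

Lemma partition_block_eq B B' x : B \in Q -> B' \in Q -> x \in B -> x \in B' -> B = B'.
Proof.
move=> BQ B'Q xB xB'; have tQ := partition_trivIset partQ.
by rewrite -(def_pblock tQ BQ xB) (def_pblock tQ B'Q xB').
Qed.

Lemma pblockT_mem x : pblock Q x \in Q.
Proof. by apply: pblock_mem; rewrite (cover_partition partQ) inE. Qed.

Lemma mem_pblockT x : x \in pblock Q x.
Proof. by rewrite mem_pblock (cover_partition partQ) inE. Qed.

End OnePartition.

Lemma red_maxdeg_refines R Q d : partition R [set: V] -> partition Q [set: V] ->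
  refines R Q -> red_maxdeg_le e Q d -> red_maxdeg_le e R (d + #|R :\: Q|).
Proof.
move=> partR partQ RQ degQ A AR; have [A' A'Q sAA'] := RQ A AR.
have sub : [set B in R | (B != A) && red_edge e A B] \subset
   (R :\: Q) :|: [set B in Q | (B != A') && red_edge e A' B].
  apply/subsetP=> B; rewrite !inE => /and3P[BR nBA redAB].
  case BQ: (B \in Q); rewrite /= ?BR ?orbT //=.
  rewrite (red_edgeS sAA' (subxx B) redAB) andbT; apply: contraNneq nBA => EB.
  have /set0Pn[x xA] := partition_neq0 partR AR.
  have xB : x \in B by rewrite EB (subsetP sAA').
  by rewrite (partition_block_eq partR BR AR xB xA).
apply: leq_trans (subset_leq_card sub) _.
rewrite addnC; apply: leq_trans (leq_card_setU _ _).1 _.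
by rewrite leq_add2l degQ.
Qed.

Lemma merge_parts_partition P A1 A2 : partition P [set: V] ->
  A1 \in P -> A2 \in P -> A1 != A2 ->
  partition (merge_parts P A1 A2) [set: V] /\ #|merge_parts P A1 A2|.+1 = #|P|.
Proof.
move=> partP A1P A2P n12.
have A2P1 : A2 \in P :\ A1 by rewrite !inE A2P eq_sym n12.
have partP12 := partitionD1 (partitionD1 partP A1P) A2P1.
have /set0Pn[x xA1] := partition_neq0 partP A1P.
have ne : A1 :|: A2 != set0 by apply/set0Pn; exists x; rewrite inE xA1.
have dis : [disjoint A1 :|: A2 & [set: V] :\: A1 :\: A2].
  by rewrite disjoint_subset; apply/subsetP=> y; rewrite !inE; case/orP=> ->; rewrite ?andbF.
have := partitionU1 partP12 ne dis.
have -> : (A1 :|: A2) :|: ([set: V] :\: A1 :\: A2) = [set: V].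
  by apply/setP=> y; rewrite !inE; case: (y \in A1); case: (y \in A2).
move=> partM; split => //.
rewrite /merge_parts cardsU1 (cardsD1 A1 P) A1P (cardsD1 A2 (P :\ A1)) A2P1.
suff -> : (A1 :|: A2) \notin P :\ A1 :\ A2 by [].
apply/negP=> /(partitionS partP12)/subsetP/(_ x).
by rewrite !inE xA1 andbF => /(_ isT).
Qed.

Lemma refines_two_in_block P Q : partition P [set: V] -> partition Q [set: V] ->
  refines P Q -> P != Q ->
  exists A1 A2 B, [/\ A1 \in P, A2 \in P, A1 != A2, B \in Q & (A1 :|: A2) \subset B].
Proof.
move=> partP partQ PQ nPQ.
case: (boolP [exists A1 in P, exists A2 in P, (A1 != A2) &&
   [exists B in Q, (A1 :|: A2) \subset B]]).
  move=> /exists_inP[A1 A1P /exists_inP[A2 A2P /andP[n12 /exists_inP[B BQ sB]]]].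
  by exists A1, A2, B.
move=> /negP noPair; case/negP: nPQ.
have blockQ A B : A \in P -> B \in Q -> A \subset B -> A = B.
  move=> AP BQ sAB; apply/eqP; rewrite eqEsubset sAB; apply/subsetP=> x xB.
  have [B' B'Q sCB'] := PQ _ (pblockT_mem partP x).
  have EB : B' = B by apply: (partition_block_eq partQ B'Q BQ _ xB);
    apply: (subsetP sCB'); apply: mem_pblockT.
  case: (eqVneq A (pblock P x)) => [-> | nAC]; first exact: mem_pblockT.
  case: noPair; apply/exists_inP; exists A => //; apply/exists_inP.
  exists (pblock P x); first exact: pblockT_mem.
  by rewrite nAC; apply/exists_inP; exists B => //; rewrite subUset sAB -EB.
apply/eqP/setP=> C; apply/idP/idP => [CP | CQ].
  by have [B BQ sCB] := PQ C CP; rewrite (blockQ C B CP BQ sCB).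
have /set0Pn[x xC] := partition_neq0 partQ CQ.
have [B BQ sAB] := PQ _ (pblockT_mem partP x).
have EA := blockQ _ B (pblockT_mem partP x) BQ sAB.
have xB : x \in B by rewrite -EA mem_pblockT.
by rewrite -(partition_block_eq partQ BQ CQ xB xC) -EA pblockT_mem.
Qed.

Lemma refines_merge P Q : partition P [set: V] -> partition Q [set: V] ->
  refines P Q -> P != Q ->
  exists P', [/\ merge_step P P', partition P' [set: V], #|P'|.+1 = #|P|,
                 refines P' Q & #|P' :\: Q| <= #|P :\: Q|].
Proof.
move=> partP partQ PQ nPQ.
have [A1 [A2 [B [A1P A2P n12 BQ sB]]]] := refines_two_in_block partP partQ PQ nPQ.
have [partM cardM] := merge_parts_partition partP A1P A2P n12.
exists (merge_parts P A1 A2); split => //; first by exists A1, A2.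
  move=> A; rewrite !inE => /orP[/eqP -> | /and3P[_ _ /PQ //]].
  by exists B.
have notQ A A' : A \in P -> A' \in P -> A != A' -> A :|: A' \subset B -> A \notin Q.
  move=> AP A'P nAA' sAB; apply/negP=> AQ.
  have /set0Pn[x xA] := partition_neq0 partP AP.
  have /set0Pn[y yA'] := partition_neq0 partP A'P.
  have EA : A = B by apply: (partition_block_eq partQ AQ BQ xA); rewrite (subsetP sAB) ?inE ?xA.
  have yA : y \in A by rewrite EA (subsetP sAB) // inE yA' orbT.
  by case/eqP: nAA'; apply: (partition_block_eq partP AP A'P yA yA').
have n21 : A2 != A1 by rewrite eq_sym.
have A1Q := notQ _ _ A1P A2P n12 sB.
have A2Q : A2 \notin Q by apply: notQ A1P n21 _ => //; rewrite setUC.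
have sub : merge_parts P A1 A2 :\: Q \subset (A1 :|: A2) |: ((P :\: Q) :\ A1 :\ A2).
  apply/subsetP=> C; rewrite !inE => /andP[-> /orP[-> // | /and3P[-> -> ->]]].
  by rewrite orbT.
apply: leq_trans (subset_leq_card sub) _.
rewrite cardsU1 (cardsD1 A1 (P :\: Q)) (cardsD1 A2 ((P :\: Q) :\ A1)) !inE.
rewrite A1P A1Q A2P A2Q n21 /=.
by apply: leq_add; [case: (~~ _) | exact: leq_addl].
Qed.

Lemma tww_from_small P d : #|P| <= 1 -> tww_from P d.
Proof.
move=> P1; case: (posnP #|P|) => [P0 | Ppos].
  by exists [::]; split => //= i; rewrite ltn0.
exists [:: P]; split => //=; first by apply/esym/anti_leq; rewrite P1.
move=> [|i] // _ A AP /=; rewrite (_ : [set _ in _ | _] = set0) ?cards0 //.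
apply/setP=> B; rewrite !inE; apply/negP => /and3P[BP nBA _].
move: P1; rewrite (cardsD1 A P) AP ltnS leqn0 cards_eq0 => /eqP/setP/(_ B).
by rewrite !inE nBA BP.
Qed.

Lemma tww_from_refines Q P d k : partition Q [set: V] ->
  red_maxdeg_le e Q d -> tww_from Q (d + k) ->
  partition P [set: V] -> refines P Q -> #|P :\: Q| <= k -> tww_from P (d + k).
Proof.
move=> partQ degQ twwQ; move: {2}#|P| (leqnn #|P|) => n.
elim: n P => [|n IH] P sizeP partP PQ diffPQ; case: (eqVneq P Q) => [-> // | nPQ].
  by apply: tww_from_small; apply: leq_trans sizeP _.
have [P' [mP partP' cardP' P'Q diffP']] := refines_merge partP partQ PQ nPQ.
have [ps [sz h0 hm hr]] : tww_from P' (d + k).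
  by apply: IH => //; [rewrite -ltnS cardP' | apply: leq_trans diffPQ].
exists (P :: ps); split => //=.
- by rewrite sz cardP'.
- by case=> [|i] /=; [move=> ps0; rewrite h0 | apply: hm].
- case=> [|i] /= hi A AP; last exact: hr.
  apply: leq_trans (red_maxdeg_refines partP partQ PQ degQ AP) _.
  by rewrite leq_add2l.
Qed.

Lemma tww_from_singletons d : tww_from [set [set x] | x : V] d -> tww_le e d.
Proof.
case=> ps [sz h0 hm hr]; exists ps; split => //.
by rewrite sz card_imset ?cardsT //; apply: set1_inj.
Qed.

End PartitionSequences.

Lemma eq_key_outside (A : Type) (K : eqType) (D : pred A) (f g : A -> K) (L : seq K) :
  (forall x, D x -> g x != f x -> f x \in L /\ g x \in L) ->
  forall x, D x -> f x \notin L -> forall y, D y -> (g x == g y) = (f x == f y).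
Proof.
move=> changed x Dx fxL y Dy.
have -> : g x = f x by apply/eqP; apply: contraNT fxL => /(changed x Dx)[].
case: (eqVneq (g y) (f y)) => [-> // | /(changed y Dy)[fyL gyL]].
have -> : (f x == g y) = false by apply: contraNF fxL => /eqP ->.
by apply/esym; apply: contraNF fxL => /eqP ->.
Qed.

Section KeyPartitions.
Variables (V : finType) (e : rel V) (K : eqType).
Implicit Types (f g : V -> K).

Definition keypart f := preim_partition f [set: V].

Lemma keypart_partition f : partition (keypart f) [set: V].
Proof. exact: preim_partitionP. Qed.

Lemma mem_keypart_pblock f x y : (y \in pblock (keypart f) x) = (f x == f y).
Proof.
rewrite /keypart /preim_partition pblock_equivalence_partition ?inE //.
by split=> // /eqP->.
Qed.

Lemma keypart_pblock f x : pblock (keypart f) x \in keypart f.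
Proof. exact/pblockT_mem/keypart_partition. Qed.

Lemma keypart_blockP f B : B \in keypart f -> exists2 x, x \in B & B = pblock (keypart f) x.
Proof.
move=> Bf; have /set0Pn[x xB] := partition_neq0 (keypart_partition f) Bf.
by exists x; rewrite // (def_pblock (partition_trivIset (keypart_partition f)) Bf xB).
Qed.

Lemma card_keypart_le f (A : {set {set V}}) (L : seq K) : A \subset keypart f ->
  (forall B, B \in A -> exists2 x, x \in B & f x \in L) -> #|A| <= size L.
Proof.
move=> /subsetP Af AL; pose key_of (B : {set V}) := omap f [pick x in B].
have key_ofE B x : B \in keypart f -> x \in B -> key_of B = Some (f x).
  move=> Bf xB; rewrite /key_of; case: pickP => [y yB | /(_ x)]; last by rewrite xB.
  have [z _ EB] := keypart_blockP Bf.
  by move: xB yB; rewrite EB !mem_keypart_pblock /= => /eqP <- /eqP <-.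
have key_of_inj : {in A &, injective key_of}.
  move=> B B' /Af Bf /Af B'f; have [y yB _] := keypart_blockP Bf.
  have [y' yB' EB'] := keypart_blockP B'f.
  rewrite (key_ofE B y) // (key_ofE B' y') // => -[fyy'].
  apply: (partition_block_eq (keypart_partition f) Bf B'f yB).
  by rewrite EB' mem_keypart_pblock fyy'.
rewrite cardE -(size_map key_of) -(size_map Some L); apply: uniq_leq_size.
  by rewrite map_inj_in_uniq ?enum_uniq // => x y; rewrite !mem_enum; apply: key_of_inj.
move=> k /mapP[B]; rewrite mem_enum => BA ->.
by have [x xB xL] := AL B BA; rewrite (key_ofE B x (Af B BA) xB) map_f.
Qed.

Lemma keypart_refines f g : (forall x y, f x = f y -> g x = g y) ->
  refines (keypart f) (keypart g).
Proof.
move=> fg A Af; have [x xA EA] := keypart_blockP Af.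
exists (pblock (keypart g) x); first exact: keypart_pblock.
by apply/subsetP=> y; rewrite EA !mem_keypart_pblock => /eqP/fg ->.
Qed.

Lemma card_keypartD f g (L : seq K) :
  (forall x, f x \notin L -> forall y, (g x == g y) = (f x == f y)) ->
  #|keypart f :\: keypart g| <= size L.
Proof.
move=> fgL; apply: (card_keypart_le (f := f)); first exact: subsetDl.
move=> B; rewrite inE => /andP[Bg Bf]; have [x xB EB] := keypart_blockP Bf.
exists x => //; apply: contraNT Bg => fxL.
suff -> : B = pblock (keypart g) x by apply: keypart_pblock.
by apply/setP=> y; rewrite EB !mem_keypart_pblock fgL.
Qed.

Lemma keypart_red_maxdeg f (cand : K -> seq K) d :
  (forall u v u' v', f u = f v -> f u' = f v' -> f u != f u' -> e u u' -> ~~ e v v' ->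
     f u' \in cand (f u)) ->
  (forall k, size (cand k) <= d) -> red_maxdeg_le e (keypart f) d.
Proof.
move=> redC sizeC A Af; have [x0 x0A EA] := keypart_blockP Af.
apply: leq_trans (sizeC (f x0)); apply: (card_keypart_le (f := f)).
  by apply/subsetP=> B; rewrite inE => /andP[].
move=> B; rewrite inE => /and3P[Bf nBA].
move=> /exists_inP[u uA /exists_inP[v vA /exists_inP[u' u'B /exists_inP[v' v'B /andP[uu' vv']]]]].
have [y yB EB] := keypart_blockP Bf.
move: uA vA u'B v'B; rewrite EA EB !mem_keypart_pblock => /eqP fu /eqP fv /eqP fu' /eqP fv'.
exists u'; first by rewrite mem_keypart_pblock fu'.
rewrite fu; apply: redC uu' vv'; [by rewrite -fu -fv | by rewrite -fu' -fv' |].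
apply: contraNneq nBA => fuu'; rewrite EA EB.
by apply/eqP/setP=> z; rewrite !mem_keypart_pblock fu' -fuu' fu.
Qed.

Lemma eq_keypart f g : f =1 g -> keypart f = keypart g.
Proof.
move=> fg; apply/setP=> B; apply/imsetP/imsetP => -[x _ ->]; exists x => //;
  by apply/setP=> y; rewrite !inE !fg.
Qed.

Lemma keypart_inj f : injective f -> keypart f = [set [set x] | x : V].
Proof.
move=> f_inj; apply/setP=> B; apply/imsetP/imsetP => -[x _ ->]; exists x => //;
  by apply/setP=> y; rewrite !inE /= (inj_eq f_inj) eq_sym.
Qed.

Lemma card_keypart_const f : (forall x y, f x = f y) -> #|keypart f| <= 1.
Proof.
move=> fconst; apply/card_le1P=> A Af B; have [x _ EA] := keypart_blockP Af.
rewrite inE; apply/idP/eqP=> [Bf | -> //]; have [y _ EB] := keypart_blockP Bf.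
by rewrite EA EB; apply/setP=> z; rewrite !mem_keypart_pblock (fconst y z) (fconst x z).
Qed.

Lemma tww_from_keypart f g d k (L : seq K) :
  tww_from e (keypart g) (d + k) -> red_maxdeg_le e (keypart g) d ->
  (forall x y, f x = f y -> g x = g y) ->
  (forall x, f x \notin L -> forall y, (g x == g y) = (f x == f y)) ->
  size L <= k -> tww_from e (keypart f) (d + k).
Proof.
move=> twwg degg fg fgL sizeL.
apply: tww_from_refines (keypart_partition g) degg twwg (keypart_partition f) _ _.
  exact: keypart_refines.
exact: leq_trans (card_keypartD fgL) sizeL.
Qed.

End KeyPartitions.

Section Ancestors.
Variable T : ptree.
Implicit Types (u x : Node).

Definition anc_at x m := anc_pos T x.1 x.2 (x.1 - m).

Lemma anc_posD n i a b : anc_pos T n i (a + b) = anc_pos T (n - a) (anc_pos T n i a) b.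
Proof.
elim: a n i => [|a IH] n i /=; first by rewrite subn0.
by rewrite IH; congr anc_pos; lia.
Qed.

Lemma anc_pos_valid n i k : i < lsize T n -> k <= n -> anc_pos T n i k < lsize T (n - k).
Proof.
elim: k n i => [|k IH] [|n] i //= ilt kn; rewrite ?subn0 //.
by rewrite -subSS; apply: IH; [exact: par_lt | exact: kn].
Qed.

Lemma anc_at_valid x m : valid T x -> m <= x.1 -> anc_at x m < lsize T m.
Proof. by move=> vx mx; have := anc_pos_valid vx (leq_subr m x.1); rewrite subKn. Qed.

Lemma anc_at_self x : anc_at x x.1 = x.2.
Proof. by rewrite /anc_at subnn. Qed.

Lemma anc_at_pred x m : 0 < m -> m <= x.1 -> anc_at x m.-1 = par T m.-1 (anc_at x m).
Proof.
move=> m0 mx; rewrite /anc_at (_ : x.1 - m.-1 = (x.1 - m) + 1); last by lia.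
by rewrite anc_posD (_ : x.1 - (x.1 - m) = m) //; lia.
Qed.

Lemma is_ancE u x : is_anc T u x = (u.1 <= x.1) && (anc_at x u.1 == u.2).
Proof. by []. Qed.

Lemma is_anc_at x m : m <= x.1 -> is_anc T (m, anc_at x m) x.
Proof. by move=> mx; rewrite is_ancE mx eqxx. Qed.

Lemma is_anc_par x m : 0 < m -> m <= x.1 -> is_anc T (m.-1, par T m.-1 (anc_at x m)) x.
Proof. by move=> m0 mx; rewrite -anc_at_pred // is_anc_at //; lia. Qed.

Lemma is_anc_refl x : is_anc T x x.
Proof. by rewrite is_ancE leqnn anc_at_self eqxx. Qed.

Lemma is_anc_depth u x : is_anc T u x -> u.1 <= x.1.
Proof. by case/andP. Qed.

Lemma anc_at_anc u x l : is_anc T u x -> l <= u.1 -> anc_at x l = anc_at u l.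
Proof.
rewrite is_ancE => /andP[ux /eqP ax] lu; rewrite /anc_at.
rewrite (_ : x.1 - l = (x.1 - u.1) + (u.1 - l)); last by lia.
by rewrite anc_posD; congr anc_pos; [lia | exact: ax].
Qed.

Lemma is_anc_depth_inj u u' x : is_anc T u x -> is_anc T u' x -> u.1 = u'.1 -> u = u'.
Proof.
case: u u' => [n a] [n' a'] /andP[_ /eqP /= <-] /andP[_ /eqP /= <-] /= <-.
by [].
Qed.

Lemma is_anc_valid u x : is_anc T u x -> valid T x -> valid T u.
Proof. by move=> /andP[ux /eqP ax] vx; rewrite /valid -ax; apply: anc_at_valid. Qed.

Lemma anc_at_root x : valid T x -> anc_at x 0 = 0.
Proof. by move=> vx; have := anc_at_valid vx (leq0n _); rewrite lsize_root; case: anc_at. Qed.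

Hypothesis neatT : neat T.

Lemma has_child n q : q < lsize T n -> exists2 c, c < lsize T n.+1 & par T n c = q.
Proof.
move=> qn; have := neatT (v := (n, q)) qn; rewrite /nchildren /= -has_count.
by move=> /hasP[c]; rewrite mem_iota add0n => /andP[_ cn] /eqP pc; exists c.
Qed.

Lemma par_succ n p : p.+1 < lsize T n.+1 ->
  par T n p.+1 = par T n p \/ par T n p.+1 = (par T n p).+1.
Proof.
move=> pn; have mono := par_mono (leqnSn p) pn.
case: (ltngtP (par T n p.+1) (par T n p).+1) => gap; [left; lia | | by right].
have [c cn pc] : exists2 c, c < lsize T n.+1 & par T n c = (par T n p).+1.
  by apply: has_child; apply: leq_trans (par_lt pn); lia.
case: (leqP c p) => cp; first by have := par_mono cp (ltnW pn); lia.
by have := par_mono cp cn; lia.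
Qed.

Lemma anc_pos_succ k n p : k <= n -> p.+1 < lsize T n ->
  anc_pos T n p.+1 k = anc_pos T n p k \/ anc_pos T n p.+1 k = (anc_pos T n p k).+1.
Proof.
elim: k n p => [|k IH] [|n] p //= kn pn; [by right | by right |].
case: (par_succ pn) => E; rewrite E; first by left.
by apply: IH => //; rewrite -E; apply: par_lt.
Qed.

Lemma anc_at_succ n p m : p.+1 < lsize T n -> m <= n ->
  anc_at (n, p.+1) m = anc_at (n, p) m \/ anc_at (n, p.+1) m = (anc_at (n, p) m).+1.
Proof. by move=> pn mn; apply: anc_pos_succ; [exact: leq_subr | exact: pn]. Qed.

End Ancestors.

Section Stages.
Variables (T : ptree) (adj : rel Node) (X : Node -> seq Node) (t : nat).
Hypothesis wheelW : layered_wheel T adj.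
Hypothesis neatT : neat T.
Hypothesis size_X : forall v, size (X v) <= t.
Hypothesis X_above : forall v y, y \in X v -> y.1 < v.1.
Hypothesis X_guards : forall v x y, valid T v -> is_anc T v x -> ~~ is_anc T v y ->
  y.1 < v.1 -> adj x y -> y \in X v.

Definition profile (x : Node) (L : seq Node) := [seq adj x y | y <- L].

Definition Owner := (nat * Node)%type.
Definition Key := (Owner * seq bool)%type.

Definition guard (o : Owner) := if o.1 == 2 then rcons (X o.2) o.2 else X o.2.

Definition owner m j i a : Owner :=
  if j <= a then (1, (m, a))
  else if par T m.-1 a < i then (1, (m.-1, par T m.-1 a)) else (2, (m.-1, par T m.-1 a)).

(* At stage (m, j, i) a node of depth at least m joins the subtree of its
   ancestor (m, a) if j <= a, and of the parent (m-1, b) of (m, a) otherwise;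
   a node (m-1, b) with b < i has itself joined its subtree.  Tag 2 marks the
   subtrees whose root has not joined yet: the root is then part of the guard.
   Tag 0 marks the nodes that are still singletons. *)
Definition stage_key m j i (x : Node) : Key :=
  if m <= x.1 then (owner m j i (anc_at T x m), profile x (guard (owner m j i (anc_at T x m))))
  else if (x.1.+1 == m) && (x.2 < i) then ((1, x), profile x (X x)) else ((0, x), [::]).

(* The stages visited by the sweep: (m, j, 0) and (m, lsize T m, i). *)
Definition stage_ok m j i := (0 < m) && ((i == 0) || (j == lsize T m)).

Lemma same_profile_adj r w u z : valid T r -> is_anc T r w -> is_anc T r u ->
  profile w (X r) = profile u (X r) -> z.1 < r.1 -> adj w z = adj u z.
Proof.
move=> vr rw ru prof zr.
case zX: (z \in X r); first by move/eq_in_map: prof => /(_ z zX).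
suff nadj x : is_anc T r x -> adj x z = false by rewrite (nadj w rw) (nadj u ru).
move=> rx; apply: contraFF zX; apply: (X_guards vr rx _ zr).
by apply/negP=> /is_anc_depth; lia.
Qed.

Lemma profile_guard w u o : profile w (guard o) = profile u (guard o) ->
  profile w (X o.2) = profile u (X o.2).
Proof. by rewrite /guard; case: ifP => // _; rewrite /profile !map_rcons => /rcons_inj[]. Qed.

Lemma stage_key_node m j i x : (stage_key m j i x).1.2 =
  if m <= x.1 then (if j <= anc_at T x m then (m, anc_at T x m)
                    else (m.-1, par T m.-1 (anc_at T x m))) else x.
Proof. by rewrite /stage_key /owner; repeat case: ifP. Qed.

Lemma stage_key_tag0 m j i x : (stage_key m j i x).1.1 = 0 -> (stage_key m j i x).1.2 = x.
Proof. by rewrite /stage_key /owner; repeat case: ifP. Qed.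

Lemma stage_key_tag0_inj m j i x y : (stage_key m j i x).1.1 = 0 ->
  stage_key m j i y = stage_key m j i x -> y = x.
Proof.
move=> x0 E; have y0 : (stage_key m j i y).1.1 = 0 by rewrite E.
by rewrite -(stage_key_tag0 y0) E (stage_key_tag0 x0).
Qed.

Lemma stage_key_owner m j i x : stage_ok m j i -> valid T x -> (stage_key m j i x).1.1 != 0 ->
  [/\ is_anc T (stage_key m j i x).1.2 x,
      (stage_key m j i x).2 = profile x (guard (stage_key m j i x).1)
    & (stage_key m j i x).1.2.1 = m \/ ((stage_key m j i x).1.2.1).+1 = m].
Proof.
case/andP=> m0 _ vx; rewrite /stage_key; case: ifP => mx.
  rewrite /owner; case: ifP => _.
    by move=> _; split => //; [exact: is_anc_at | left].
  by case: ifP => _ _; (split => //=; [exact: is_anc_par | right; lia]).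
case: ifP => // /andP[/eqP <- _] _; split => //; [exact: is_anc_refl | by right].
Qed.

Lemma stage_key_adj m j i w u z : stage_ok m j i -> valid T w -> valid T u ->
  stage_key m j i w = stage_key m j i u -> (stage_key m j i u).1.1 != 0 ->
  z.1 < (stage_key m j i u).1.2.1 -> adj w z = adj u z.
Proof.
move=> ok vw vu E u0 zu.
have w0 : (stage_key m j i w).1.1 != 0 by rewrite E.
have [aw pw _] := stage_key_owner ok vw w0; have [au pu _] := stage_key_owner ok vu u0.
rewrite E in aw pw.
apply: (same_profile_adj (is_anc_valid au vu) aw au _ zu).
by apply: profile_guard; rewrite -pw -pu.
Qed.

Lemma stage_key_anc m j i u u' : stage_ok m j i -> valid T u -> valid T u' ->
  is_anc T u' u -> u'.1 < u.1 ->
  (stage_key m j i u').1.2 = (stage_key m j i u).1.2 \/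
  ((stage_key m j i u').1.1 = 0 /\
   forall w, valid T w -> stage_key m j i w = stage_key m j i u -> adj w u' = adj u u').
Proof.
move=> ok vu vu' u'u u'lt; case/andP: (ok) => m0 iok.
case: (leqP m u'.1) => mu'.
  left; rewrite !stage_key_node mu' (leq_trans mu' (ltnW u'lt)) (anc_at_anc u'u mu') //.
case: (eqVneq (stage_key m j i u').1.1 0) => u'0.
  case: (eqVneq (stage_key m j i u).1.1 0) => u0.
    by right; split => // w vw E; rewrite (stage_key_tag0_inj u0 E).
  have [ou _ du] := stage_key_owner ok vu u0.
  case: (ltnP u'.1 (stage_key m j i u).1.2.1) => u'o.
    by right; split => // w vw E; apply: stage_key_adj ok vw vu E u0 u'o.
  by left; rewrite (stage_key_tag0 u'0); apply: (is_anc_depth_inj u'u ou); lia.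
move: u'0; rewrite /stage_key leqNgt mu' /=; case: ifP => // /andP[/eqP u'm u'i] _ /=.
left; have mu : m <= u.1 by lia.
rewrite stage_key_node mu.
have -> : j <= anc_at T u m = false.
  case/orP: iok => [/eqP i0 | /eqP ->]; first by rewrite i0 in u'i.
  by rewrite leqNgt anc_at_valid.
by apply: (is_anc_depth_inj u'u (is_anc_par T m0 mu)); rewrite /= -u'm.
Qed.

Definition near_owners m j (r : Node) : seq Node :=
  [:: r; (r.1, r.2.-1); (r.1, r.2.+1); (r.1.-1, par T r.1.-1 r.2.-1); (m, j)].

Lemma stage_key_layer m j i n p : valid T (n, p.+1) ->
  (stage_key m j i (n, p.+1)).1.2 \in near_owners m j (stage_key m j i (n, p)).1.2 /\
  (stage_key m j i (n, p)).1.2 \in near_owners m j (stage_key m j i (n, p.+1)).1.2.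
Proof.
move=> vp'; rewrite !stage_key_node /=.
case: (leqP m n) => mn; last by rewrite !inE !eqxx !orbT.
set a := anc_at T (n, p) m.
have va' := anc_at_valid vp' mn.
case: (anc_at_succ neatT vp' mn) => E; rewrite E -/a in va' *; first by rewrite !inE !eqxx.
case: (leqP j a) => ja; first by rewrite (leq_trans ja (leqnSn a)) !inE !eqxx !orbT.
case: (leqP j a.+1) => ja'.
  have -> : j = a.+1 by lia.
  by rewrite !inE !eqxx !orbT.
have m0 : 0 < m by apply: contraTT va'; rewrite lt0n negbK => /eqP ->; rewrite lsize_root.
have va'' : a.+1 < lsize T m.-1.+1 by rewrite prednK.
by case: (par_succ neatT va'') => ->; rewrite !inE !eqxx ?orbT.
Qed.

Lemma stage_key_red m j i u v u' v' : stage_ok m j i ->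
  valid T u -> valid T v -> valid T u' -> valid T v' ->
  stage_key m j i u = stage_key m j i v -> stage_key m j i u' = stage_key m j i v' ->
  adj u u' -> ~~ adj v v' ->
  (stage_key m j i u').1.2 \in near_owners m j (stage_key m j i u).1.2.
Proof.
move=> ok vu vv vu' vv' Euv Eu'v' uu' nvv'.
case: (eqVneq u.1 u'.1) => du.
  clear Euv Eu'v'; case: u u' du vu vu' uu' => [n p] [_ q] /= <- vu vu' uu'.
  move: (lw_layer wheelW vu vu') => /=; rewrite uu' => /esym/orP[/eqP qE | /eqP pE].
    by subst q; case: (stage_key_layer m j i vu').
  by subst p; case: (stage_key_layer m j i vu).
case/orP: (lw_anc wheelW uu' du) => anc.
  have lt : u.1 < u'.1 by have := is_anc_depth anc; lia.
  case: (stage_key_anc ok vu' vu anc lt) => [-> | [u0 adjE]]; first by rewrite inE eqxx.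
  have Ev : v = u by apply: (stage_key_tag0_inj u0); rewrite Euv.
  by move: nvv'; rewrite Ev (lw_sym wheelW) (adjE v' vv' (esym Eu'v')) (lw_sym wheelW) uu'.
have lt : u'.1 < u.1 by have := is_anc_depth anc; lia.
case: (stage_key_anc ok vu vu' anc lt) => [-> | [u'0 adjE]]; first by rewrite inE eqxx.
have Ev' : v' = u' by apply: (stage_key_tag0_inj u'0); rewrite Eu'v'.
by move: nvv'; rewrite Ev' (adjE v vv (esym Euv)) uu'.
Qed.

Definition bitseqs n : seq (seq bool) := map val (enum {: n.-tuple bool}).

Lemma mem_bitseqs s : s \in bitseqs (size s).
Proof. by apply/mapP; exists (in_tuple s); rewrite ?mem_enum. Qed.

Lemma size_bitseqs n : size (bitseqs n) = 2 ^ n.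
Proof. by rewrite size_map -cardE card_tuple card_bool. Qed.

Definition owner_keys (o : Node) : seq Key :=
  ((0, o), [::]) :: [seq ((1, o), bs) | bs <- bitseqs (size (X o))] ++
                   [seq ((2, o), bs) | bs <- bitseqs (size (X o)).+1].

Definition keys_per_owner := 1 + 2 ^ t + 2 ^ t.+1.

Lemma size_owner_keys o : size (owner_keys o) <= keys_per_owner.
Proof.
rewrite /owner_keys /= size_cat !(size_map _ (bitseqs _)) !size_bitseqs.
rewrite /keys_per_owner -addnA add1n ltnS.
by apply: leq_add; apply: leq_pexp2l; rewrite ?ltnS ?size_X.
Qed.

Lemma mem_owner_keys x (o : Owner) : (o.1 == 1) || (o.1 == 2) ->
  (o, profile x (guard o)) \in owner_keys o.2.
Proof.
case: o => [tag r] /= /orP[] /eqP ->; rewrite /guard /= inE mem_cat.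
  by rewrite (map_f (fun bs => (1, r, bs))) ?orbT // -(size_map (adj x)) mem_bitseqs.
rewrite (map_f (fun bs => (2, r, bs))) ?orbT //.
by rewrite -(size_rcons (X r) r) -(size_map (adj x)) mem_bitseqs.
Qed.

Lemma stage_key_owner_keys m j i x : stage_key m j i x \in owner_keys (stage_key m j i x).1.2.
Proof.
rewrite /stage_key; case: ifP => _.
  by apply: mem_owner_keys; rewrite /owner; repeat case: ifP.
case: ifP => _; last by rewrite inE eqxx.
exact: (@mem_owner_keys x (1, x)).
Qed.

Definition red_candidates m j (k : Key) : seq Key :=
  flatten [seq owner_keys o | o <- near_owners m j k.1.2].

Lemma size_red_candidates m j k : size (red_candidates m j k) <= 5 * keys_per_owner.
Proof.
rewrite /red_candidates size_flatten /shape sumnE !big_map.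
apply: (@leq_trans (\sum_(o <- near_owners m j k.1.2) keys_per_owner)).
  by apply: leq_sum => o _; apply: size_owner_keys.
by rewrite big_const_seq /=; lia.
Qed.

Lemma stage_key_merge_subtree m j x : stage_key m j.+1 0 x =
  if (stage_key m j 0 x).1 == (1, (m, j))
  then ((2, (m.-1, par T m.-1 j)), profile x (guard (2, (m.-1, par T m.-1 j))))
  else stage_key m j 0 x.
Proof.
rewrite /stage_key; case: ifP => mx; last by rewrite !ltn0 !andbF.
rewrite /owner /=; set a := anc_at T x m.
case: (eqVneq a j) => [-> | naj]; first by rewrite leqnn ltnn eqxx.
case: (leqP j a) => ja; last by rewrite ltnNge (ltnW ja).
have -> : j < a by rewrite ltn_neqAle eq_sym naj ja.
by rewrite !xpair_eqE /= eqxx (negbTE naj).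
Qed.

Lemma stage_key_merge_subtree_coarsen m j x y : 0 < m -> valid T x -> valid T y ->
  stage_key m j 0 x = stage_key m j 0 y -> stage_key m j.+1 0 x = stage_key m j.+1 0 y.
Proof.
move=> m0 vx vy E; rewrite !stage_key_merge_subtree E; case: ifP => // /eqP o.
congr pair; apply/eq_in_map => z zg.
apply: (stage_key_adj (_ : stage_ok m j 0) vx vy E); [by rewrite /stage_ok m0 | by rewrite o |].
by rewrite o /=; move: zg; rewrite /guard /= mem_rcons inE => /orP[/eqP -> /= | /X_above /=]; lia.
Qed.

Lemma stage_key_merge_subtree_changed m j x : stage_key m j.+1 0 x != stage_key m j 0 x ->
  stage_key m j 0 x \in owner_keys (m, j) /\
  stage_key m j.+1 0 x \in owner_keys (m.-1, par T m.-1 j).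
Proof.
rewrite stage_key_merge_subtree; case: ifP => [/eqP o _ | _]; last by rewrite eqxx.
split; last exact: mem_owner_keys.
by have := stage_key_owner_keys m j 0 x; rewrite o.
Qed.

Lemma stage_key_join_root m i x : valid T x -> stage_key m (lsize T m) i.+1 x =
  if (stage_key m (lsize T m) i x).1.2 == (m.-1, i)
  then ((1, (m.-1, i)), profile x (X (m.-1, i))) else stage_key m (lsize T m) i x.
Proof.
move=> vx; rewrite /stage_key; case: ifP => mx.
  have la : (lsize T m <= anc_at T x m) = false by rewrite leqNgt anc_at_valid.
  rewrite /owner la /=.
  case: (eqVneq (par T m.-1 (anc_at T x m)) i) => [-> | ni].
    by rewrite ltnn ltnSn eqxx.
  rewrite ltnS leq_eqVlt (negbTE ni) /=.
  by case: ifP => _; rewrite /= xpair_eqE eqxx /= (negbTE ni).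
case: (eqVneq x.1.+1 m) => /= x1.
  case: (eqVneq x.2 i) => [x2 | nx2].
    rewrite x2 ltnn ltnSn /=.
    suff -> : x = (m.-1, i) by rewrite eqxx.
    by case: x x1 x2 {mx vx} => x1 x2 /= <- ->.
  rewrite ltnS leq_eqVlt (negbTE nx2) /=.
  have nxi : (x == (m.-1, i)) = false.
    by case: x {mx vx x1} nx2 => x1 x2 /= nx2; rewrite xpair_eqE (negbTE nx2) andbF.
  by case: ifP => _ /=; rewrite nxi.
suff -> : (x == (m.-1, i)) = false by [].
by apply/negbTE; apply: contra x1 => /eqP xE; move: mx; rewrite xE /=; case: (m).
Qed.

Lemma stage_key_join_root_coarsen m i x y : 0 < m -> valid T x -> valid T y ->
  stage_key m (lsize T m) i x = stage_key m (lsize T m) i y ->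
  stage_key m (lsize T m) i.+1 x = stage_key m (lsize T m) i.+1 y.
Proof.
move=> m0 vx vy E; rewrite !stage_key_join_root // E; case: ifP => // /eqP o.
case: (eqVneq (stage_key m (lsize T m) i y).1.1 0) => y0.
  by rewrite (stage_key_tag0_inj y0 E).
congr pair; apply/eq_in_map => z /X_above zo.
apply: (stage_key_adj (_ : stage_ok m (lsize T m) i) vx vy E y0); rewrite ?o //.
by rewrite /stage_ok m0 eqxx orbT.
Qed.

Lemma stage_key_join_root_changed m i x : valid T x ->
  stage_key m (lsize T m) i.+1 x != stage_key m (lsize T m) i x ->
  stage_key m (lsize T m) i x \in owner_keys (m.-1, i) /\
  stage_key m (lsize T m) i.+1 x \in owner_keys (m.-1, i).
Proof.
move=> vx; rewrite stage_key_join_root //; case: ifP => [/eqP o _ | _]; last by rewrite eqxx.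
by split; [rewrite -o; apply: stage_key_owner_keys | apply: (@mem_owner_keys x (1, (m.-1, i)))].
Qed.

Lemma stage_key_bridge m x : 0 < m -> valid T x ->
  stage_key m (lsize T m) (lsize T m.-1) x = stage_key m.-1 0 0 x.
Proof.
move=> m0 vx; rewrite /stage_key; case: (leqP m x.1) => mx.
  have mx' : m.-1 <= x.1 by lia.
  have lp : par T m.-1 (anc_at T x m) < lsize T m.-1.
    by apply: par_lt; rewrite prednK // anc_at_valid.
  by rewrite mx' anc_at_pred // /owner leqNgt anc_at_valid //= lp.
case: (eqVneq x.1.+1 m) => [x1 | nx1] /=.
  rewrite -x1 /= leqnn anc_at_self /owner (_ : x.2 < lsize T x.1) //.
  by case: x {vx mx x1}.
by rewrite ltn0 andbF (_ : m.-1 <= x.1 = false) //; lia.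
Qed.

Section InducedSubgraph.
Variable S : seq Node.
Hypothesis S_valid : all (valid T) S.

Definition stage_part m j i := keypart (fun x : seq_sub S => stage_key m j i (ssval x)).

Definition stage_tww m j i :=
  tww_from (induced adj S) (stage_part m j i) (7 * keys_per_owner).

Lemma valid_ssval (x : seq_sub S) : valid T (ssval x).
Proof. exact: (allP S_valid) _ (ssvalP x). Qed.

Lemma stage_part_red_maxdeg m j i : stage_ok m j i ->
  red_maxdeg_le (induced adj S) (stage_part m j i) (5 * keys_per_owner).
Proof.
move=> ok; apply: (keypart_red_maxdeg (cand := red_candidates m j)); last first.
  exact: size_red_candidates.
move=> u v u' v' Euv Eu'v' _ uu' nvv'; apply/flatten_mapP.
exists (stage_key m j i (ssval u')).1.2; last exact: stage_key_owner_keys.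
by apply: (stage_key_red ok _ (valid_ssval v) _ (valid_ssval v') Euv Eu'v' uu' nvv');
  apply: valid_ssval.
Qed.

Lemma stage_tww_refine m j i m' j' i' (L : seq Key) :
  stage_ok m' j' i' -> stage_tww m' j' i' ->
  (forall x y, valid T x -> valid T y ->
     stage_key m j i x = stage_key m j i y -> stage_key m' j' i' x = stage_key m' j' i' y) ->
  (forall x, valid T x -> stage_key m' j' i' x != stage_key m j i x ->
     stage_key m j i x \in L /\ stage_key m' j' i' x \in L) ->
  size L <= 2 * keys_per_owner -> stage_tww m j i.
Proof.
move=> ok' tww' coarse changed sizeL.
have split7 : 7 * keys_per_owner = 5 * keys_per_owner + 2 * keys_per_owner.
  by rewrite -mulnDl.
move: tww'; rewrite /stage_tww split7 => tww'.
apply: (tww_from_keypart tww' (stage_part_red_maxdeg ok') _ _ sizeL).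
  by move=> x y; apply: coarse; apply: valid_ssval.
by move=> x keyx y; apply: (eq_key_outside changed); rewrite ?valid_ssval.
Qed.

Lemma stage_tww_merge_subtree m j : 0 < m -> stage_tww m j.+1 0 -> stage_tww m j 0.
Proof.
move=> m0 /(stage_tww_refine (L := owner_keys (m, j) ++ owner_keys (m.-1, par T m.-1 j))).
apply.
- by rewrite /stage_ok m0.
- by move=> x y vx vy; apply: stage_key_merge_subtree_coarsen.
- by move=> x _ /stage_key_merge_subtree_changed[old new]; rewrite !mem_cat old new orbT.
- by rewrite size_cat mul2n -addnn leq_add ?size_owner_keys.
Qed.

Lemma stage_tww_join_root m i : 0 < m -> stage_tww m (lsize T m) i.+1 -> stage_tww m (lsize T m) i.
Proof.
move=> m0 /(stage_tww_refine (L := owner_keys (m.-1, i))); apply.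
- by rewrite /stage_ok m0 eqxx orbT.
- by move=> x y vx vy; apply: stage_key_join_root_coarsen.
- by move=> x vx /(stage_key_join_root_changed vx).
- by apply: leq_trans (size_owner_keys _) _; rewrite leq_pmull.
Qed.

Lemma stage_tww_root : stage_tww 0 0 0.
Proof.
apply: tww_from_small; apply: card_keypart_const => x y.
have X_root : X (0, 0) = [::].
  by case: (X (0, 0)) (@X_above (0, 0)) => [|y' s] // /(_ y' (mem_head _ _)).
suff rootE (z : Node) : valid T z -> stage_key 0 0 0 z = ((1, (0, 0)), [::]).
  by rewrite !rootE ?valid_ssval.
by move=> vz; rewrite /stage_key anc_at_root // /owner /guard /= X_root.
Qed.

Lemma stage_tww_layer m : stage_tww m 0 0.
Proof.
elim: m => [|m IH]; first exact: stage_tww_root.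
have twwB : forall i, i <= lsize T m -> stage_tww m.+1 (lsize T m.+1) i.
  apply: downward_ind => [|i _]; last exact: stage_tww_join_root.
  rewrite /stage_tww /stage_part (eq_keypart (g := fun x => stage_key m 0 0 (ssval x))) //.
  by move=> x; apply: stage_key_bridge; rewrite ?valid_ssval.
have twwA : forall j, j <= lsize T m.+1 -> stage_tww m.+1 j 0.
  by apply: downward_ind => [|j _]; [exact: twwB | exact: stage_tww_merge_subtree].
exact: twwA.
Qed.

Lemma stage_part_bottom :
  stage_part (\max_(x <- S) x.1).+1 0 0 = [set [set x] | x : seq_sub S].
Proof.
apply: keypart_inj => x y; rewrite /stage_key.
have below (z : seq_sub S) : ((\max_(x <- S) x.1).+1 <= (ssval z).1) = false.
  apply/negbTE; rewrite -ltnNge ltnS.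
  exact: (leq_bigmax_seq (F := fun x : Node => x.1)) (ssvalP z) _.
by rewrite !below !ltn0 !andbF => -[/val_inj].
Qed.

Lemma tww_le_induced : tww_le (induced adj S) (7 * keys_per_owner).
Proof.
have := stage_tww_layer (\max_(x <- S) x.1).+1.
by rewrite /stage_tww stage_part_bottom; apply: tww_from_singletons.
Qed.

End InducedSubgraph.

End Stages.

Lemma upward_restricted_guards T adj : upward_restricted T adj ->
  exists t (X : Node -> seq Node),
    [/\ forall v, size (X v) <= t,
        forall v y, y \in X v -> y.1 < v.1 &
        forall v x y, valid T v -> is_anc T v x -> ~~ is_anc T v y ->
          y.1 < v.1 -> adj x y -> y \in X v].
Proof.
case=> t restricted.
have guards v : exists X : seq Node, size X <= t /\ forall x y, valid T v -> is_anc T v x ->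
    ~~ is_anc T v y -> y.1 < v.1 -> adj x y -> y \in X.
  case vv: (valid T v); last by exists [::].
  have [X [sizeX _ guardX]] := restricted v vv.
  exists X; split=> // x y _ vx nvy yv xy; apply: (guardX x y xy _ vx nvy).
  by apply: contraTneq (is_anc_depth vx) => ->; rewrite -ltnNge.
pose G v := constructive_indefinite_description _ (guards v).
exists t, (fun v => [seq y <- sval (G v) | y.1 < v.1]).
split=> [v | v y | v x y vv vx nvy yv xy].
- by rewrite size_filter; apply: leq_trans (count_size _ _) (proj2_sig (G v)).1.
- by rewrite mem_filter => /andP[].
by rewrite mem_filter yv; apply: (proj2_sig (G v)).2 x y vv vx nvy yv xy.
Qed.

Theorem theorem1p14 (T : ptree) (adj : rel Node) :
  layered_wheel T adj -> neat T -> upward_restricted T adj ->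
  exists d : nat, forall S : seq Node, all (valid T) S ->
    tww_le (induced adj S) d.
Proof.
move=> wheelW neatT /upward_restricted_guards[t [X [size_X X_above X_guards]]].
exists (7 * keys_per_owner t) => S S_valid.
exact: tww_le_induced wheelW neatT size_X X_above X_guards S S_valid.
Qed.
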